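(* Let $m$ be a prime power and let $l,s,t$ be positive integers such that $m\geq l-1$ and $2t-1\leq l$. Define $q=(s-1)m+1$. If there exists an $OA(t,l,s)$, then there exists a $q$-ary $c$-frameproof code of length $l$ and cardinality $\frac{s^t-1}{(s-1)^t}(q-1)^t$, for every integer $c\geq t$ such that $l=c(t-1)+r$ for some $r\in\{t,t+1,\ldots,c\}$.
   Context: An $OA(t,l,s)$ (orthogonal array of strength $t$, with $l$ constraints, $s\geq 2$ levels and index $1$) is an $l\times s^t$ array with entries from a set of $s$ symbols such that in every $t\times s^t$ subarray (choice of $t$ rows), every $t\times 1$ column vector over the symbol set appears exactly once. For $P\subseteq F^l$ over a finite alphabet $F$, $desc(P)=\{x\in F^l: \text{for every } i \text{ there is } y\in P \text{ with } x_i=y_i\}$. For an integer $c\geq 2$, a $c$-frameproof code of length $l$ is a subset $C\subseteq F^l$ with $desc(P)\cap C=P$ for every $P\subseteq C$ with $|P|\leq c$; it is $q$-ary if $|F|=q$. *)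

From mathcomp Require Import all_boot all_order all_algebra.
Set Implicit Arguments. Unset Strict Implicit. Unset Printing Implicit Defensive.

(* Orthogonal array OA(t,l,s) of index 1: an l x s^t array A (row i, column j
   entry A i j) over the s-symbol set 'I_s, such that for every choice of t
   distinct rows (given as an injective map r : 'I_t -> 'I_l) every column
   vector v over the symbols appears exactly once among the columns. *)
Definition is_OA (t l s : nat) (A : 'I_l -> 'I_(s ^ t) -> 'I_s) : Prop :=
  forall r : 'I_t -> 'I_l, injective r ->
  forall v : 'I_t -> 'I_s,
    #|[set j : 'I_(s ^ t) | [forall k : 'I_t, A (r k) j == v k]]| = 1%N.

Definition exists_OA (t l s : nat) : Prop :=
  (2 <= s)%N /\ exists A : 'I_l -> 'I_(s ^ t) -> 'I_s, is_OA A.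

Definition desc (F : finType) (l : nat) (P : {set {ffun 'I_l -> F}})
  : {set {ffun 'I_l -> F}} :=
  [set x : {ffun 'I_l -> F} | [forall i : 'I_l, [exists y in P, x i == y i]]].

Definition frameproof (F : finType) (l c : nat) (C : {set {ffun 'I_l -> F}})
  : Prop :=
  forall P : {set {ffun 'I_l -> F}},
    P \subset C -> (#|P| <= c)%N -> desc P :&: C = P.

Definition prime_power (m : nat) : Prop :=
  exists p k : nat, prime p /\ (0 < k)%N /\ m = (p ^ k)%N.

From mathcomp Require Import all_boot all_order all_algebra all_field.
From mathcomp Require Import zify.
Import GRing.Theory Num.Theory.
Set Implicit Arguments. Unset Strict Implicit. Unset Printing Implicit Defensive.

(* A codeword is indexed by a column j <> j0 of the orthogonal array A and by a
   polynomial f of degree < t over GF(m).  In row i it carries a special zero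
   symbol when A i j = A i j0, and otherwise the pair formed by A i j
   (relabelled among the s - 1 symbols other than A i j0) and the value of f at
   the i-th point of a doubly extended Reed-Solomon code.  Distinct columns of
   an OA(t,l,s) agree in at most t - 1 rows and distinct polynomials of degree
   < t agree in at most t - 1 points, so a codeword has at most t - 1 zero
   coordinates and shares at most t - 1 nonzero coordinates with any other
   codeword.  Were a codeword x a descendant of c other codewords, every
   coordinate of x would be a zero of x or a nonzero agreement with one of
   them, whence l <= (c + 1)(t - 1), contradicting l = c(t - 1) + r, r >= t. *)

Lemma leq_card_bigcup (I T : finType) (P : {pred I}) (B : I -> {set T}) :
  #|\bigcup_(i in P) B i| <= \sum_(i in P) #|B i|.
Proof.
elim/big_rec2: _ => [|i n U _ le_U]; first by rewrite cards0.
by apply: leq_trans (leq_card_setU _ _) _; rewrite leq_add2l.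
Qed.

Lemma frameproof_of_few_agreements (F : finType) (l c d : nat) (z : F)
    (C : {set {ffun 'I_l -> F}}) :
  c.+1 * d < l ->
  {in C, forall x : {ffun 'I_l -> F}, #|[set i | x i == z]| <= d} ->
  {in C &, forall x y : {ffun 'I_l -> F},
     x != y -> #|[set i | (x i != z) && (x i == y i)]| <= d} ->
  frameproof c C.
Proof.
move=> lt_l few_z few_agree P sPC leP; apply/setP => x; rewrite inE.
apply/andP/idP => [[xdP xC] | xP]; last first.
  split; last exact: subsetP sPC x xP.
  by rewrite inE; apply/forallP => i; apply/existsP; exists x; rewrite xP /=.
apply/idPn => xNP.
pose B (y : {ffun 'I_l -> F}) := [set i | (x i != z) && (x i == y i)].
have cover : [set: 'I_l] \subset [set i | x i == z] :|: \bigcup_(y in P) B y.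
  apply/subsetP => i _; rewrite !inE; case: eqP => //= /eqP xiNz.
  move: xdP; rewrite inE => /forallP/(_ i)/existsP[y /andP[yP xyi]].
  by apply/bigcupP; exists y; rewrite // inE xiNz.
have few_B y : y \in P -> #|B y| <= d.
  move=> yP; apply: few_agree => //; first exact: (subsetP sPC).
  by apply: contraNneq xNP => ->.
have le_B : #|\bigcup_(y in P) B y| <= #|P| * d.
  by rewrite -sum_nat_const; apply: leq_trans (leq_card_bigcup _ _) (leq_sum _ few_B).
have : l <= d + #|P| * d.
  rewrite -{1}(card_ord l) -cardsT; apply: leq_trans (subset_leq_card cover) _.
  exact: leq_trans (leq_card_setU _ _) (leq_add (few_z _ xC) le_B).
have := leq_mul leP (leqnn d); rewrite mulSn in lt_l; lia.
Qed.

Lemma neq_of_few_agreements (F : finType) (l d : nat) (z : F)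
    (x y : {ffun 'I_l -> F}) :
  d.*2 < l -> #|[set i | x i == z]| <= d ->
  #|[set i | (x i != z) && (x i == y i)]| <= d -> x != y.
Proof.
move=> lt_l few_z; apply: contraTneq => <-; rewrite -ltnNge.
have -> : [set i | (x i != z) && (x i == x i)] = ~: [set i | x i == z].
  by apply/setP => i; rewrite !inE eqxx andbT.
have := cardsC [set i | x i == z]; rewrite card_ord; lia.
Qed.

Lemma is_OA_col_agree (t l s : nat) (A : 'I_l -> 'I_(s ^ t) -> 'I_s) (j j' : 'I_(s ^ t)) :
  is_OA A -> j != j' -> #|[set i | A i j == A i j']| < t.
Proof.
move=> A_OA; apply: contraNT; rewrite -leqNgt => le_t.
pose r (k : 'I_t) : 'I_l := enum_val (widen_ord le_t k).
have r_inj : injective r by move=> k k' /enum_val_inj/(congr1 val)/=/val_inj.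
have /eqP/cards1P[j1 col] := A_OA r r_inj (fun k => A (r k) j).
have in_col (j2 : 'I_(s ^ t)) : j2 \in [set j1] -> j2 = j1 by rewrite inE => /eqP.
have -> : j = j1 by apply: in_col; rewrite -col inE; apply/forallP.
have -> // : j' = j1.
apply: in_col; rewrite -col inE; apply/forallP => k.
by have := enum_valP (widen_ord le_t k); rewrite inE eq_sym.
Qed.

Section ExtendedReedSolomon.
Variables (F : idomainType) (n k : nat) (pt : 'I_n -> F).
Hypothesis pt_inj : injective pt.
Local Open Scope ring_scope.

Definition rs_poly (f : {ffun 'I_k.+1 -> F}) : {poly F} := \poly_(i < k.+1) f (inord i).

Lemma coef_rs_poly f (i : 'I_k.+1) : (rs_poly f)`_i = f i.
Proof. by rewrite coef_poly ltn_ord inord_val. Qed.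

Lemma rs_polyB f g : rs_poly (f - g) = rs_poly f - rs_poly g.
Proof. by apply/polyP => i; rewrite coefB !coef_poly; case: ifP; rewrite ?ffunE ?subr0. Qed.

Lemma rs_poly_eq0 f : (rs_poly f == 0) = (f == 0).
Proof.
apply/eqP/eqP => [f0 | ->]; last by apply/polyP => i; rewrite coef_poly ffunE coef0 if_same.
by apply/ffunP => i; rewrite -coef_rs_poly f0 coef0 ffunE.
Qed.

(* The last coordinate is the point at infinity: it reads off the top coefficient. *)
Definition ext_rs (f : {ffun 'I_k.+1 -> F}) (i : 'I_n.+1) : F :=
  if unlift ord_max i is Some i' then (rs_poly f).[pt i'] else f ord_max.

Lemma ext_rsB f g i : ext_rs (f - g) i = ext_rs f i - ext_rs g i.
Proof. by rewrite /ext_rs rs_polyB; case: unlift => [i'|]; rewrite ?hornerE ?ffunE. Qed.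

Lemma card_roots_lt_size (p : {poly F}) : p != 0 -> (#|[set i | root p (pt i)]| < size p)%N.
Proof.
move=> p_nz; rewrite cardE -(size_map pt); apply: max_poly_roots => //.
  by apply/allP => x /mapP[i]; rewrite mem_enum inE => ? ->.
by rewrite map_inj_uniq ?enum_uniq.
Qed.

Lemma ext_rs_zeros f : f != 0 -> (#|[set i | ext_rs f i == 0%R]| <= k)%N.
Proof.
rewrite -rs_poly_eq0 => p_nz; set Z := [set i | ext_rs f i == 0].
set R := lift ord_max @: [set i | root (rs_poly f) (pt i)].
have finite_zeros : Z :\ ord_max \subset R.
  apply/subsetP => i; rewrite !inE /ext_rs.
  case: (unliftP ord_max i) => [i' ->|->]; last by rewrite eqxx.
  by move=> /andP[_ /eqP fi0]; apply: imset_f; rewrite inE /root fi0.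
have le_R : (#|R| < size (rs_poly f))%N.
  by rewrite card_imset ?card_roots_lt_size //; apply: lift_inj.
have := subset_leq_card finite_zeros; rewrite [#|Z|](cardsD1 ord_max).
have [top0 | top_nz] := eqVneq (f ord_max) 0.
  suff : (size (rs_poly f) <= k)%N by have := leq_b1 (ord_max \in Z); lia.
  apply/leq_sizeP => j; rewrite leq_eqVlt => /predU1P[<- | lt_kj].
    exact: etrans (coef_rs_poly f ord_max) top0.
  by rewrite /rs_poly coef_poly ltnNge lt_kj.
have -> : ord_max \in Z = false by rewrite inE /ext_rs unlift_none (negbTE top_nz).
have := size_poly k.+1 (fun i => f (inord i)); rewrite -/(rs_poly f); lia.
Qed.

Lemma ext_rs_agree f g : f != g -> (#|[set i | ext_rs f i == ext_rs g i]| <= k)%N.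
Proof.
rewrite -subr_eq0 => /ext_rs_zeros; apply: leq_trans; apply: subset_leq_card.
by apply/subsetP => i; rewrite !inE ext_rsB subr_eq0.
Qed.

End ExtendedReedSolomon.

Section OAReedSolomonCode.
Variables (l' t' s : nat) (F : finIdomainType) (G : finType).
Variables (A : 'I_l'.+1 -> 'I_(s ^ t'.+1) -> 'I_s) (j0 : 'I_(s ^ t'.+1)).
Variables (pt : 'I_l' -> F) (h : option ('I_s.-1 * F) -> G).
Hypotheses (A_OA : is_OA A) (pt_inj : injective pt) (h_inj : injective h).

(* [None] is the zero symbol; [unlift] relabels A i j within [set~ A i j0]. *)
Definition oa_rs_symbol (p : 'I_(s ^ t'.+1) * {ffun 'I_t'.+1 -> F}) (i : 'I_l'.+1)
    : option ('I_s.-1 * F) :=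
  omap (fun a => (a, ext_rs pt p.2 i)) (unlift (A i j0) (A i p.1)).

Definition oa_rs_word p : {ffun 'I_l'.+1 -> G} := [ffun i => h (oa_rs_symbol p i)].

Definition oa_rs_code : {set {ffun 'I_l'.+1 -> G}} :=
  oa_rs_word @: setX [set~ j0] [set: {ffun 'I_t'.+1 -> F}].

Lemma oa_rs_symbol_eq p p' i :
  oa_rs_symbol p i != None -> oa_rs_symbol p i == oa_rs_symbol p' i ->
  A i p.1 = A i p'.1 /\ ext_rs pt p.2 i = ext_rs pt p'.2 i.
Proof.
rewrite /oa_rs_symbol; case: unliftP => //= a -> _.
by case: unliftP => //= a' -> /eqP[-> ->].
Qed.

Lemma oa_rs_word_zeros p :
  p.1 != j0 -> #|[set i | oa_rs_word p i == h None]| <= t'.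
Proof.
move=> /(is_OA_col_agree A_OA); rewrite ltnS; apply: leq_trans; apply: subset_leq_card.
apply/subsetP => i; rewrite !inE ffunE (inj_eq h_inj) /oa_rs_symbol.
by case: unliftP => [a ->|->] //; rewrite eqxx.
Qed.

Lemma oa_rs_word_agree p p' : p != p' ->
  #|[set i | (oa_rs_word p i != h None) && (oa_rs_word p i == oa_rs_word p' i)]| <= t'.
Proof.
case: p p' => j f [j' f'] ne_p.
have agree_sub (S : {set 'I_l'.+1}) :
    (forall i, A i j = A i j' -> ext_rs pt f i = ext_rs pt f' i -> i \in S) ->
    [set i | (oa_rs_word (j, f) i != h None)
             && (oa_rs_word (j, f) i == oa_rs_word (j', f') i)] \subset S.
  move=> in_S; apply/subsetP => i; rewrite inE !ffunE !(inj_eq h_inj).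
  by case/andP=> /oa_rs_symbol_eq/[apply]-[]; apply: in_S.
have [eq_j | ne_j] := eqVneq j j'.
  have ne_f : f != f' by apply: contraNneq ne_p => <-; rewrite eq_j.
  apply: leq_trans (ext_rs_agree pt_inj ne_f).
  by apply/subset_leq_card/agree_sub => i _; rewrite inE => ->.
have := is_OA_col_agree A_OA ne_j; rewrite ltnS; apply: leq_trans.
by apply/subset_leq_card/agree_sub => i eq_A _; rewrite inE eq_A.
Qed.

Lemma frameproof_oa_rs_code c : c.+1 * t' < l'.+1 -> frameproof c oa_rs_code.
Proof.
move=> lt_l; apply: (frameproof_of_few_agreements (z := h None) lt_l).
  move=> _ /imsetP[[j f] /setXP[+ _] ->]; rewrite in_setC1 => ne_j.
  exact: (oa_rs_word_zeros (p := (j, f)) ne_j).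
move=> _ _ /imsetP[p _ ->] /imsetP[p' _ ->] ne_w.
by apply: oa_rs_word_agree; apply: contraNneq ne_w => ->.
Qed.

Lemma card_oa_rs_code : t'.*2 < l'.+1 ->
  #|oa_rs_code| = (s ^ t'.+1).-1 * #|F| ^ t'.+1.
Proof.
move=> lt_l; rewrite card_in_imset; last first.
  move=> [j f] p' /setXP[+ _] _ eq_w; rewrite in_setC1 => ne_j.
  apply/eqP; apply: contraTT isT => ne_p.
  have := neq_of_few_agreements lt_l (oa_rs_word_zeros (p := (j, f)) ne_j)
                                      (oa_rs_word_agree ne_p).
  by rewrite eq_w eqxx.
by rewrite cardsX cardsC1 cardsT card_ffun !card_ord.
Qed.

End OAReedSolomonCode.

Theorem lemma7 (m l s t : nat) :
  prime_power m -> (0 < l)%N -> (0 < s)%N -> (0 < t)%N ->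
  (l - 1 <= m)%N -> (2 * t - 1 <= l)%N ->
  exists_OA t l s ->
  forall c : nat, (2 <= c)%N -> (t <= c)%N ->
  (exists r : nat, [/\ (t <= r)%N, (r <= c)%N & l = (c * (t - 1) + r)%N]) ->
  let q := ((s - 1) * m + 1)%N in
  exists C : {set {ffun 'I_l -> 'I_q}},
    frameproof c C /\
    (#|C|%:R : rat) = ((s ^ t - 1)%:R / ((s - 1) ^ t)%:R * ((q - 1) ^ t)%:R)%R.
Proof.
move=> [p [k [p_pr [k_gt0 m_eq]]]] l_gt0 _ t_gt0 le_l_m le_2t_l [s_ge2 [A A_OA]].
move=> c _ _ [r [le_t_r _ l_eq]] q.
case: t t_gt0 le_2t_l le_t_r l_eq A A_OA => [//|t' _] le_2t_l le_t_r l_eq.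
case: l l_gt0 le_l_m le_2t_l l_eq => [//|l' _] le_l_m le_2t_l l_eq A A_OA.
have [F _] := pPrimePowerField p_pr k_gt0; rewrite -m_eq => card_F.
have le_l_F : l' <= #|F| by rewrite card_F; lia.
pose pt := enum_val \o widen_ord le_l_F.
have pt_inj : injective pt by move=> i j /enum_val_inj/(congr1 val)/=/val_inj.
have card_symbols : #|{: option ('I_s.-1 * F)}| = q.
  by rewrite card_option card_prod card_ord card_F /q; lia.
pose h := cast_ord card_symbols \o enum_rank.
have h_inj : injective h by move=> x y /cast_ord_inj/enum_rank_inj.
have s_pow_gt0 : 0 < s ^ t'.+1 by rewrite expn_gt0; lia.
exists (oa_rs_code A (Ordinal s_pow_gt0) pt h).
split; first by apply: frameproof_oa_rs_code => //; rewrite mulSn; lia.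
rewrite card_oa_rs_code //; last by lia.
rewrite card_F /q addnK expnMn !natrM mulrA divfK ?subn1 //.
by rewrite pnatr_eq0 expn_eq0; lia.
Qed.
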